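(* Let $\mathcal{I}$ be a metric space, $d\ge1$, $\boldsymbol{S}\colon\mathcal{I}\to\mathbb{C}^{d\times d}$, $i\mapsto S_i$, continuous, and let $\varLambda\subset\varSigma_{\mathcal{I}}^+$ be a nonempty compact set invariant under the one-sided shift $\theta_+$. Put $\boldsymbol{S}^+_{\upharpoonright\varLambda}(0)=\{\mathrm{Id}_{\mathbb{C}^d}\}$, $\boldsymbol{S}^+_{\upharpoonright\varLambda}(\ell)=\{S_{i_\ell}\cdots S_{i_1}: i(\cdot)\in\varLambda\}$ for $\ell\ge1$, and $\boldsymbol{S}^+_{\upharpoonright\varLambda}=\bigcup_{\ell\ge0}\boldsymbol{S}^+_{\upharpoonright\varLambda}(\ell)$. Then $S_{i_n}\cdots S_{i_1}\to\mathbf{0}_{d\times d}$ as $n\to\infty$ for every $i(\cdot)\in\varLambda$ if and only if both (1) there is $\beta>0$ with $\|A\|_2\le\beta$ for all $A\in\boldsymbol{S}^+_{\upharpoonright\varLambda}$, and (2) there exist a constant $\gamma$ with $0<\gamma<1$ and an integer $N\ge1$ such that $\rho(A)\le\gamma$ for all $A\in\boldsymbol{S}^+_{\upharpoonright\varLambda}(\ell)$ and all $\ell\ge N$.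
   Context: $\varSigma_{\mathcal{I}}^+$ is the set of sequences $i(\cdot)=(i_n)_{n\ge1}$ in $\mathcal{I}$ with the product topology, $\theta_+$ the shift $(i_n)_{n\ge1}\mapsto(i_{n+1})_{n\ge1}$. $\|\cdot\|_2$ is the matrix norm induced by the Euclidean norm on $\mathbb{C}^d$, and $\rho(A)$ is the spectral radius. *)

From HB Require Import structures.
From mathcomp Require Import all_boot all_order all_algebra.
From mathcomp Require Import all_classical all_reals all_analysis.
From mathcomp Require Import complex.

Set Implicit Arguments.
Unset Strict Implicit.
Unset Printing Implicit Defensive.

Import Order.TTheory GRing.Theory Num.Theory.
Local Open Scope classical_set_scope.
Local Open Scope ring_scope.

Section Defs.
Variable R : realType.

Definition cabs (z : R[i]) : R := Num.sqrt (complex.Re z ^+ 2 + complex.Im z ^+ 2).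

Definition vnorm2 (d : nat) (v : 'cV[R[i]]_d) : R :=
  Num.sqrt (\sum_(j < d) cabs (v j ord0) ^+ 2).

Definition opnorm2 (d : nat) (A : 'M[R[i]]_d) : R :=
  sup [set vnorm2 (A *m v) | v in [set v : 'cV[R[i]]_d | vnorm2 v <= 1]].

Definition specrad (d : nat) (A : 'M[R[i]]_d) : R :=
  sup [set cabs l | l in [set l : R[i] | eigenvalue A l]].

(* one-sided shift on sequences (i_n)_{n>=1}, stored 0-indexed: i n = i_{n+1} *)
Definition theta_plus {I : Type} (i : nat -> I) : nat -> I := fun n => i n.+1.

Fixpoint prodS {I : Type} (d : nat) (S : I -> 'M[R[i]]_d) (i : nat -> I) (l : nat)
  : 'M[R[i]]_d :=
  match l with
  | 0 => 1%:M
  | l'.+1 => S (i l') *m prodS S i l'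
  end.

Definition Splus {I : Type} (d : nat) (S : I -> 'M[R[i]]_d) (Lam : set (nat -> I))
  (l : nat) : set 'M[R[i]]_d :=
  if l is 0 then [set 1%:M] else [set prodS S i l | i in Lam].

Definition Splus_all {I : Type} (d : nat) (S : I -> 'M[R[i]]_d) (Lam : set (nat -> I))
  : set 'M[R[i]]_d :=
  \bigcup_(l in [set: nat]) Splus S Lam l.

End Defs.

(* Forward direction: by compactness of [Lam] and continuity of the finite
   products, there is a uniform [M] such that along every sequence of [Lam]
   some product of length at most [M] has norm below 1/2.  Chaining such
   blocks through the shift makes all products decay exponentially, uniformly
   on [Lam]; this bounds them and, since the spectral radius is at most the
   norm, pushes their spectral radii below 1/2 for long products.
   Converse: the products [P_m] along a sequence are bounded, so by the
   pigeonhole principle two of them are nearly equal, [P_m] and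
   [P_(m+l) = W P_m] with [l >= N].  The eigenvalues of [W] have modulus at
   most [gamma < 1], so [|det (1 - W)| >= (1 - gamma)^d] and Cramer's rule
   bounds [P_m] by a constant times [P_m - W P_m]: [P_m] is small, and so are
   all later products. *)

From HB Require Import structures.
From mathcomp Require Import all_boot all_order all_algebra all_fingroup.
From mathcomp Require Import all_classical all_reals all_analysis.
From mathcomp Require Import complex.
From mathcomp Require Import ring lra.

Set Implicit Arguments.
Unset Strict Implicit.
Unset Printing Implicit Defensive.

Import Order.TTheory GRing.Theory Num.Theory.
Import numFieldTopology.Exports.
Local Open Scope classical_set_scope.
Local Open Scope ring_scope.

Section ComplexModulus.
Variable R : realType.
Local Notation C := R[i].
Implicit Types z w : C.

Lemma cabsE z : ((cabs z)%:C)%C = `|z|.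
Proof. by rewrite normc_def. Qed.

Lemma cabs_ge0 z : 0 <= cabs z.
Proof. exact: sqrtr_ge0. Qed.

Lemma cabsD z w : cabs (z + w) <= cabs z + cabs w.
Proof. by rewrite -lecR rmorphD /= !cabsE ler_normD. Qed.

Lemma cabsM z w : cabs (z * w) = cabs z * cabs w.
Proof. by apply: complexI; rewrite rmorphM /= !cabsE normrM. Qed.

Lemma cabsN z : cabs (- z) = cabs z.
Proof. by apply: complexI; rewrite !cabsE normrN. Qed.

Lemma cabs0 : cabs (0 : C) = 0.
Proof. by apply: complexI; rewrite cabsE normr0. Qed.

Lemma cabs1 : cabs (1 : C) = 1.
Proof. by apply: complexI; rewrite cabsE normr1. Qed.

Lemma cabs_eq0 z : (cabs z == 0) = (z == 0).
Proof. by rewrite -(inj_eq (@complexI R)) rmorph0 cabsE normr_eq0. Qed.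

Lemma cabs_signr n : cabs ((-1 : C) ^+ n) = 1.
Proof. by apply: complexI; rewrite cabsE normrX normrN1 expr1n. Qed.

Lemma cabs_delta (b : bool) : cabs (b%:R : C) <= 1.
Proof. by case: b; rewrite ?cabs1 ?cabs0 ?ler01. Qed.

Lemma cabs_lerB z w : cabs z - cabs w <= cabs (z - w).
Proof. by rewrite lerBlDr (le_trans _ (cabsD _ _)) // subrK. Qed.

Lemma cabs_sum (J : Type) (r : seq J) (P : pred J) (F : J -> C) :
  cabs (\sum_(j <- r | P j) F j) <= \sum_(j <- r | P j) cabs (F j).
Proof.
elim/big_rec2: _ => [|j y s _ Hy]; first by rewrite cabs0.
by rewrite (le_trans (cabsD _ _)) // lerD2l.
Qed.

Lemma cabs_prod (J : Type) (r : seq J) (P : pred J) (F : J -> C) :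
  cabs (\prod_(j <- r | P j) F j) = \prod_(j <- r | P j) cabs (F j).
Proof. by elim/big_rec2: _ => [|j y s _ IH]; rewrite ?cabs1 // cabsM IH. Qed.

Lemma normr_Re_le z : `|complex.Re z| <= cabs z.
Proof. by rewrite -sqrtr_sqr ler_sqrt ?addr_ge0 ?sqr_ge0 // lerDl sqr_ge0. Qed.

Lemma normr_Im_le z : `|complex.Im z| <= cabs z.
Proof. by rewrite -sqrtr_sqr ler_sqrt ?addr_ge0 ?sqr_ge0 // lerDr sqr_ge0. Qed.

Lemma cabs_le_ReIm z : cabs z <= `|complex.Re z| + `|complex.Im z|.
Proof.
rewrite /cabs; set a := complex.Re z; set b := complex.Im z.
have ab0 : 0 <= `|a| + `|b| by rewrite addr_ge0.
rewrite -(ger0_norm ab0) -sqrtr_sqr ler_sqrt ?sqr_ge0 //.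
rewrite sqrrD -(real_normK (num_real a)) -(real_normK (num_real b)).
by rewrite -addrA lerD2l lerDr mulrn_wge0 // mulr_ge0.
Qed.

End ComplexModulus.

Section EntrywiseNorm.
Variable R : realType.
Local Notation C := R[i].

Definition mxnorm1 m n (A : 'M[C]_(m, n)) : R := \sum_i \sum_j cabs (A i j).

Lemma mxnorm1_ge0 m n (A : 'M[C]_(m, n)) : 0 <= mxnorm1 A.
Proof. by do 2![apply: sumr_ge0 => ? _]; exact: cabs_ge0. Qed.

Lemma cabs_le_mxnorm1 m n (A : 'M[C]_(m, n)) i j : cabs (A i j) <= mxnorm1 A.
Proof.
rewrite /mxnorm1 (bigD1 i) //= (bigD1 j) //= -addrA lerDl.
by rewrite addr_ge0 //; do ?[apply: sumr_ge0 => ? _]; exact: cabs_ge0.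
Qed.

Lemma mxnorm1_gt0 m n (A : 'M[C]_(m, n)) : A != 0 -> 0 < mxnorm1 A.
Proof.
case/matrix0Pn=> i [j Aij]; apply: lt_le_trans (cabs_le_mxnorm1 A i j).
by rewrite lt_def cabs_eq0 Aij cabs_ge0.
Qed.

Lemma mxnorm1M m n p (A : 'M[C]_(m, n)) (B : 'M[C]_(n, p)) :
  mxnorm1 (A *m B) <= mxnorm1 A * mxnorm1 B.
Proof.
rewrite /mxnorm1 mulr_suml; apply: ler_sum => i _.
apply: (@le_trans _ _ (\sum_k \sum_l cabs (A i l) * cabs (B l k))).
  apply: ler_sum => k _; rewrite mxE (le_trans (cabs_sum _ _ _)) //.
  by apply: ler_sum => l _; rewrite cabsM.
rewrite exchange_big mulr_suml; apply: ler_sum => l _.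
rewrite -mulr_sumr ler_wpM2l ?cabs_ge0 // (bigD1 l) //= lerDl.
by apply: sumr_ge0 => ? _; apply: sumr_ge0 => ? _; exact: cabs_ge0.
Qed.

Lemma mxnorm1Z m n (c : C) (A : 'M[C]_(m, n)) : mxnorm1 (c *: A) = cabs c * mxnorm1 A.
Proof.
rewrite /mxnorm1 mulr_sumr; apply: eq_bigr => i _; rewrite mulr_sumr.
by apply: eq_bigr => j _; rewrite mxE cabsM.
Qed.

Lemma mxnorm1_le m n (A : 'M[C]_(m, n)) (K : R) :
  (forall i j, cabs (A i j) <= K) -> mxnorm1 A <= (m * n)%:R * K.
Proof.
move=> AK; apply: (@le_trans _ _ (\sum_(i < m) \sum_(j < n) K)).
  by do 2![apply: ler_sum => ? _]; exact: AK.
by rewrite !sumr_const !card_ord -mulrnA mulr_natl mulnC.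
Qed.

Lemma sum_sqr_le_sqr_sum (J : finType) (F : J -> R) : (forall j, 0 <= F j) ->
  \sum_j F j ^+ 2 <= (\sum_j F j) ^+ 2.
Proof.
move=> F0; suff [] : 0 <= \sum_j F j /\ \sum_j F j ^+ 2 <= (\sum_j F j) ^+ 2 by [].
apply: (big_ind2 (fun s t => 0 <= t /\ s <= t ^+ 2))
  => [|x1 x2 y1 y2 [x20 h1] [y20 h2]|j _]; [by rewrite expr0n | | by []].
split; first exact: addr_ge0.
rewrite (le_trans (lerD h1 h2)) // sqrrD -addrA lerD2l lerDr.
by rewrite mulrn_wge0 // mulr_ge0.
Qed.

Lemma vnorm2_le_mxnorm1 d (v : 'cV[C]_d) : vnorm2 v <= mxnorm1 v.
Proof.
have sum0 : 0 <= \sum_j cabs (v j ord0) by apply: sumr_ge0 => ? _; exact: cabs_ge0.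
rewrite /mxnorm1 (eq_bigr (fun j => cabs (v j ord0))) => [|j _]; last by rewrite big_ord1.
rewrite -(ger0_norm sum0) -sqrtr_sqr ler_sqrt ?sqr_ge0 //.
by apply: sum_sqr_le_sqr_sum => ?; exact: cabs_ge0.
Qed.

Lemma cabs_le_vnorm2 d (v : 'cV[C]_d) j : cabs (v j ord0) <= vnorm2 v.
Proof.
rewrite -(ger0_norm (cabs_ge0 _)) -sqrtr_sqr ler_sqrt; last first.
  by rewrite sumr_ge0 // => ? _; exact: sqr_ge0.
by rewrite (bigD1 j) //= lerDl sumr_ge0 // => ? _; exact: sqr_ge0.
Qed.

Lemma vnorm2_mulmx d (A : 'M[C]_d) (v : 'cV[C]_d) :
  vnorm2 (A *m v) <= mxnorm1 A * vnorm2 v.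
Proof.
apply: le_trans (vnorm2_le_mxnorm1 _) _.
rewrite /mxnorm1 mulr_suml; apply: ler_sum => i _; rewrite big_ord1 mxE.
rewrite (le_trans (cabs_sum _ _ _)) // mulr_suml; apply: ler_sum => j _.
by rewrite cabsM ler_wpM2l ?cabs_ge0 ?cabs_le_vnorm2.
Qed.

Lemma opnorm2_ub d (A : 'M[C]_d) v : vnorm2 v <= 1 -> vnorm2 (A *m v) <= mxnorm1 A.
Proof.
move=> v1; rewrite (le_trans (vnorm2_mulmx A v)) //.
by rewrite -[leRHS]mulr1 ler_wpM2l ?mxnorm1_ge0.
Qed.

Lemma vnorm2_0 d : vnorm2 (0 : 'cV[C]_d) = 0.
Proof. by rewrite /vnorm2 big1 ?sqrtr0 // => j _; rewrite mxE cabs0 expr0n. Qed.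

Lemma opnorm2_le_mxnorm1 d (A : 'M[C]_d) : opnorm2 A <= mxnorm1 A.
Proof.
apply: ge_sup; last by move=> _ [v v1 <-]; exact: opnorm2_ub.
by exists (vnorm2 (A *m 0)), 0; rewrite //= vnorm2_0 ler01.
Qed.

Lemma opnorm2_ge0 d (A : 'M[C]_d) : 0 <= opnorm2 A.
Proof.
apply: ub_le_sup; first by exists (mxnorm1 A) => _ [v v1 <-]; exact: opnorm2_ub.
by exists 0; rewrite /= ?vnorm2_0 ?mulmx0 ?vnorm2_0 ?ler01.
Qed.

Lemma cabs_le_opnorm2 d (A : 'M[C]_d) i j : cabs (A i j) <= opnorm2 A.
Proof.
have -> : A i j = (A *m (delta_mx j 0 : 'cV_d)) i 0 by rewrite -colE mxE.
apply: le_trans (cabs_le_vnorm2 _ _) _; apply: ub_le_sup.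
  by exists (mxnorm1 A) => _ [v v1 <-]; exact: opnorm2_ub.
exists (delta_mx j 0) => //=; rewrite /vnorm2 (bigD1 j) //= big1 ?addr0.
  by rewrite mxE !eqxx cabs1 expr1n sqrtr1.
by move=> l /negbTE jl; rewrite mxE jl cabs0 expr0n.
Qed.

End EntrywiseNorm.

Section Spectrum.
Variable R : realType.
Local Notation C := R[i].

Lemma eigenvalue_le_mxnorm1 d (A : 'M[C]_d) l : eigenvalue A l -> cabs l <= mxnorm1 A.
Proof.
case/eigenvalueP=> v vA v0; have := mxnorm1M v A.
by rewrite vA mxnorm1Z mulrC ler_pM2l // mxnorm1_gt0.
Qed.

Lemma eigenvalue_le_specrad d (A : 'M[C]_d) l : eigenvalue A l -> cabs l <= specrad A.
Proof.
move=> Al; apply: ub_le_sup; last by exists l.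
by exists (mxnorm1 A) => _ [l' Al' <-]; exact: eigenvalue_le_mxnorm1.
Qed.

Lemma specrad_le d (A : 'M[C]_d) g : 0 <= g ->
  (forall l, eigenvalue A l -> cabs l <= g) -> specrad A <= g.
Proof.
move=> g0 Ag; rewrite /specrad.
have [->|/set0P ne] := eqVneq [set cabs l | l in [set l : C | eigenvalue A l]] set0.
  by rewrite sup0.
by apply: ge_sup => // _ [l Al <-]; exact: Ag.
Qed.

Lemma specrad_le_mxnorm1 d (A : 'M[C]_d) : specrad A <= mxnorm1 A.
Proof. by apply: specrad_le; [exact: mxnorm1_ge0 | exact: eigenvalue_le_mxnorm1]. Qed.

Lemma cabs_det_le n (A : 'M[C]_n) (K : R) : 0 <= K ->
  (forall i j, cabs (A i j) <= K) -> cabs (\det A) <= n`!%:R * K ^+ n.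
Proof.
move=> K0 AK; rewrite (le_trans (cabs_sum _ _ _)) //.
apply: (@le_trans _ _ (\sum_(s : 'S_n) K ^+ n)); last by rewrite sumr_const card_Sn mulr_natl.
apply: ler_sum => s _; rewrite cabsM cabs_signr mul1r cabs_prod.
have -> : K ^+ n = \prod_(i < n) K by rewrite prodr_const card_ord.
by apply: ler_prod => i _; rewrite cabs_ge0 AK.
Qed.

Lemma cabs_adj_le n (A : 'M[C]_n) (K : R) : 0 <= K ->
  (forall i j, cabs (A i j) <= K) ->
  forall i j, cabs (\adj A i j) <= (n.-1)`!%:R * K ^+ n.-1.
Proof.
move=> K0 AK i j; rewrite mxE /cofactor cabsM cabs_signr mul1r.
by apply: cabs_det_le => // a b; rewrite !mxE.
Qed.

Lemma horner_char_poly n (A : 'M[C]_n) (a : C) : (char_poly A).[a] = \det (a%:M - A).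
Proof.
rewrite horner_sum; apply: eq_bigr => s _.
rewrite hornerM horner_exp !hornerE; congr (_ * _).
rewrite (big_morph _ (fun p q => hornerM p q a) (hornerC 1 a)).
by apply: eq_bigr => i _; rewrite !mxE !(hornerE, hornerMn).
Qed.

(* [det (1 - A)] is the product of the [1 - z] over the eigenvalues [z] of [A]. *)
Lemma cabs_det_1B_ge n (A : 'M[C]_n) (g : R) : g < 1 ->
  (forall l, eigenvalue A l -> cabs l <= g) -> (1 - g) ^+ n <= cabs (\det (1%:M - A)).
Proof.
move=> g1 Ag; have [r defA] := closed_field_poly_normal (char_poly A).
rewrite (monicP (char_poly_monic A)) scale1r in defA.
have sz : size r = n by have := size_char_poly A; rewrite defA size_prod_XsubC => -[].
have -> : (1 - g) ^+ n = \prod_(k < size r) (1 - g) by rewrite prodr_const card_ord sz.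
rewrite -horner_char_poly defA horner_prod cabs_prod (big_nth 0) big_mkord.
apply: ler_prod => k _.
rewrite subr_ge0 (ltW g1) hornerXsubC /= (le_trans _ (cabs_lerB _ _)) // cabs1 lerD2l lerN2.
by apply: Ag; rewrite eigenvalue_root_char defA root_prod_XsubC mem_nth.
Qed.

(* Cramer's rule [det M *: Y = adj M *m (M *m Y)] for [M = 1 - W]. *)
Lemma mxnorm1_le_1B d p (W : 'M[C]_d) (Y : 'M[C]_(d, p)) (beta gamma : R) :
  0 <= beta -> gamma < 1 -> (forall a b, cabs (W a b) <= beta) ->
  (forall l, eigenvalue W l -> cabs l <= gamma) ->
  (1 - gamma) ^+ d * mxnorm1 Y <=
    (d * d)%:R * ((d.-1)`!%:R * (1 + beta) ^+ d.-1) * mxnorm1 (Y - W *m Y).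
Proof.
move=> beta0 g1 Wbeta Wg; set M := 1%:M - W.
have Mbeta a b : cabs (M a b) <= 1 + beta.
  by rewrite !mxE (le_trans (cabsD _ _)) // cabsN lerD ?cabs_delta.
have beta1 : 0 <= 1 + beta by rewrite addr_ge0.
have -> : Y - W *m Y = M *m Y by rewrite mulmxBl mul1mx.
apply: (@le_trans _ _ (cabs (\det M) * mxnorm1 Y)).
  by rewrite ler_wpM2r ?mxnorm1_ge0 ?cabs_det_1B_ge.
rewrite -mxnorm1Z -mul_scalar_mx -mul_adj_mx -mulmxA (le_trans (mxnorm1M _ _)) //.
by rewrite ler_wpM2r ?mxnorm1_ge0 // mxnorm1_le //; exact: cabs_adj_le.
Qed.

End Spectrum.

Lemma exists_lt_eq (T : finType) (f : 'I_#|T|.+1 -> T) :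
  exists t1 t2 : 'I_#|T|.+1, (t1 < t2)%N /\ f t1 = f t2.
Proof.
have /injectivePn [t1 [t2 t12 ft]] : ~~ injectiveb f.
  by apply/injectiveP => /leq_card; rewrite card_ord ltnn.
case: (ltngtP t1 t2) => [lt12|lt21|/val_inj e12]; first by exists t1, t2.
  by exists t2, t1.
by rewrite e12 eqxx in t12.
Qed.

Section BoundedSequences.
Variable R : realType.

Lemma truncn_eq_dist (u v : R) : 0 <= u -> 0 <= v ->
  Num.truncn u = Num.truncn v -> `|u - v| < 1.
Proof.
move=> u0 v0 uv; have ul : (Num.truncn v)%:R <= u by rewrite -uv truncn_le.
have vl : (Num.truncn v)%:R <= v by rewrite truncn_le.
have := truncnS_gt u; have := truncnS_gt v; rewrite uv -natr1 ltr_norml => vu uu.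
by apply/andP; split; lra.
Qed.

(* Cut the box [-beta, beta]^J into finitely many cells of side [del] and
   apply the pigeonhole principle to the times [t * N]. *)
Lemma bounded_seq_close_pair (J : finType) (u : nat -> J -> R) (beta del : R) (N : nat) :
  0 < del -> (forall m j, `|u m j| <= beta) ->
  exists m1 m2, (m1 + N <= m2)%N /\ forall j, `|u m1 j - u m2 j| < del.
Proof.
move=> del0 ub; set L := Num.truncn (2 * beta / del).
pose cell m : {ffun J -> 'I_L.+1} := [ffun j => inord (Num.truncn ((u m j + beta) / del))].
have [t1 [t2 [lt12 e]]] := exists_lt_eq (fun t : 'I_#|{ffun J -> 'I_L.+1}|.+1 => cell (t * N)%N).
exists (t1 * N)%N, (t2 * N)%N; split; first by rewrite addnC -mulSn leq_mul2r lt12 orbT.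
move=> j; have := congr1 (fun f : {ffun J -> 'I_L.+1} => val (f j)) e; rewrite /= !ffunE.
have ubj m : - beta <= u m j <= beta by rewrite -ler_norml.
have scaled_ge0 m : 0 <= (u m j + beta) / del.
  by have /andP[? _] := ubj m; rewrite divr_ge0 ?(ltW del0) //; lra.
have scaled_lt m : (Num.truncn ((u m j + beta) / del) < L.+1)%N.
  rewrite ltnS le_truncn // ler_pM2r ?invr_gt0 //.
  by have /andP[_ ?] := ubj m; lra.
rewrite !inordK // => /(truncn_eq_dist (scaled_ge0 _) (scaled_ge0 _)).
rewrite -mulrBl normrM (@gtr0_norm _ del^-1) ?invr_gt0 // ltr_pdivrMr // mul1r.
by rewrite opprD addrACA subrr addr0.
Qed.

End BoundedSequences.

Lemma bounded_cseq_close_pair (R : realType) (J : finType) (u : nat -> J -> R[i])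
    (beta del : R) (N : nat) :
  0 < del -> (forall m j, cabs (u m j) <= beta) ->
  exists m1 m2, (m1 + N <= m2)%N /\ forall j, cabs (u m1 j - u m2 j) < 2 * del.
Proof.
move=> del0 ub; pose v m (p : J * bool) := if p.2 then complex.Re (u m p.1) else complex.Im (u m p.1).
have vb m p : `|v m p| <= beta.
  case: p => j [|] /=; apply: le_trans (ub m j); [exact: normr_Re_le | exact: normr_Im_le].
have [m1 [m2 [m12 close]]] := bounded_seq_close_pair N del0 vb.
exists m1, m2; split => // j; apply: le_lt_trans (cabs_le_ReIm _) _.
move: (close (j, true)) (close (j, false)); rewrite /v /=.
by case: (u m1 j) => x1 y1; case: (u m2 j) => x2 y2 /= hx hy; lra.
Qed.

Section Products.
Variables (R : realType) (I : Type) (d : nat) (S : I -> 'M[R[i]]_d).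

Lemma iter_theta_plus (i : nat -> I) m n : iter m theta_plus i n = i (n + m)%N.
Proof. by elim: m n => [|m IHm] n; rewrite ?addn0 // iterS /theta_plus IHm addSnnS. Qed.

Lemma prodS_add (i : nat -> I) m n :
  prodS S i (m + n) = prodS S (iter m theta_plus i) n *m prodS S i m.
Proof.
elim: n => [|n IHn]; first by rewrite addn0 mul1mx.
by rewrite addnS /= IHn mulmxA iter_theta_plus addnC.
Qed.

Variable Lam : set (nat -> I).
Hypothesis Lam_shift : forall i, Lam i -> Lam (theta_plus i).

Lemma Lam_iter_theta_plus i m : Lam i -> Lam (iter m theta_plus i).
Proof. by move=> Li; elim: m => //= m; exact: Lam_shift. Qed.

Lemma Splus_prodS i l : Lam i -> (0 < l)%N -> Splus S Lam l (prodS S i l).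
Proof. by case: l => // l Li _; exists i. Qed.

Lemma Splus_all_prodS i l : Lam i -> Splus_all S Lam (prodS S i l).
Proof. by move=> Li; exists l => //; case: l => //= l; exists i. Qed.

End Products.

Section Converse.
Variables (R : realType) (I : Type) (d : nat) (S : I -> 'M[R[i]]_d).
Variables (Lam : set (nat -> I)) (beta gamma : R) (N : nat).
Hypothesis Lam_shift : forall i, Lam i -> Lam (theta_plus i).
Hypothesis Splus_bounded : forall A, Splus_all S Lam A -> opnorm2 A <= beta.
Hypothesis gamma_lt1 : gamma < 1.
Hypothesis N_gt0 : (0 < N)%N.
Hypothesis Splus_specrad :
  forall l, (N <= l)%N -> forall A, Splus S Lam l A -> specrad A <= gamma.

Lemma cabs_prodS_le i l a b : Lam i -> cabs (prodS S i l a b) <= beta.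
Proof.
move=> Li; apply: le_trans (cabs_le_opnorm2 _ a b) _.
exact/Splus_bounded/Splus_all_prodS.
Qed.

Lemma beta_ge0 i : Lam i -> 0 <= beta.
Proof.
move=> Li; apply: le_trans (opnorm2_ge0 (prodS S i 0)) _.
exact/Splus_bounded/Splus_all_prodS.
Qed.

Lemma mxnorm1_prodS_le i l : Lam i -> mxnorm1 (prodS S i l) <= (d * d)%:R * beta.
Proof. by move=> Li; apply: mxnorm1_le => a b; exact: cabs_prodS_le. Qed.

(* Two products [Y] and [W Y] that nearly coincide, with [W] a product of
   length at least [N], force [Y] to be small since [1 - W] is uniformly
   invertible. *)
Lemma prodS_small i c : Lam i -> 0 < c -> exists m, mxnorm1 (prodS S i m) < c.
Proof.
move=> Li c0; have beta0 := beta_ge0 Li.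
set K := (d * d)%:R * ((d.-1)`!%:R * (1 + beta) ^+ d.-1).
have K0 : 0 <= K by rewrite !mulr_ge0 ?exprn_ge0 ?addr_ge0.
set e := (1 - gamma) ^+ d * c.
have e0 : 0 < e by rewrite mulr_gt0 // exprn_gt0 // subr_gt0.
pose del := e / (2 * (K * (d * d)%:R + 1)).
have Q0 : 0 <= K * (d * d)%:R by rewrite mulr_ge0.
have del0 : 0 < del by rewrite divr_gt0 // mulr_gt0 //; lra.
have [m1 [m2 [m12 close]]] := @bounded_cseq_close_pair _ _
  (fun m (p : 'I_d * 'I_d) => prodS S i m p.1 p.2) _ _ N del0
  (fun m p => cabs_prodS_le m p.1 p.2 Li).
exists m1; set Y := prodS S i m1; set W := prodS S (iter m1 theta_plus i) (m2 - m1).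
have Li' : Lam (iter m1 theta_plus i) by exact: Lam_iter_theta_plus.
have m12' : (m1 <= m2)%N by rewrite (leq_trans (leq_addr _ _) m12).
have l_ge : (N <= m2 - m1)%N by rewrite leq_subRL // addnC.
have WY : prodS S i m2 = W *m Y by rewrite -prodS_add subnKC.
have Weig l : eigenvalue W l -> cabs l <= gamma.
  move=> Wl; apply: le_trans (eigenvalue_le_specrad Wl) (Splus_specrad l_ge _).
  by apply: Splus_prodS => //; apply: leq_trans l_ge.
have := @mxnorm1_le_1B _ _ _ W Y _ _ beta0 gamma_lt1
  (fun a b => cabs_prodS_le _ a b Li') Weig.
rewrite -WY -/K => YK.
have g1 : 0 < 1 - gamma by rewrite subr_gt0.
rewrite -(ltr_pM2l (exprn_gt0 d g1)) (le_lt_trans YK) //.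
have diff : mxnorm1 (Y - prodS S i m2) <= (d * d)%:R * (2 * del).
  by apply: mxnorm1_le => a b; rewrite !mxE; exact: ltW (close (a, b)).
rewrite (le_lt_trans (ler_wpM2l K0 diff)) //.
have -> : K * ((d * d)%:R * (2 * del)) = K * (d * d)%:R * e / (K * (d * d)%:R + 1).
  by rewrite /del; field; rewrite gt_eqF //; lra.
rewrite ltr_pdivrMr -/e; [nra | lra].
Qed.

Lemma prodS_cvg0 i : Lam i ->
  forall a b, (fun n => cabs (prodS S i n a b)) @ \oo --> (0 : R).
Proof.
move=> Li a b; apply/cvgr0Pnorm_lt => eps eps0.
set B := (d * d)%:R * beta; have B0 : 0 <= B by rewrite mulr_ge0 ?(beta_ge0 Li).
have [m Bm] := prodS_small Li (divr_gt0 eps0 (ltr_wpDl B0 ltr01)).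
near=> n; rewrite ger0_norm ?cabs_ge0 //.
rewrite -(subnKC (_ : m <= n)%N); last by near: n; exact: nbhs_infty_ge.
rewrite prodS_add (le_lt_trans (cabs_le_mxnorm1 _ a b)) // (le_lt_trans (mxnorm1M _ _)) //.
have Lim : Lam (iter m theta_plus i) by exact: Lam_iter_theta_plus.
rewrite (le_lt_trans (ler_wpM2r (mxnorm1_ge0 _) (mxnorm1_prodS_le _ Lim))) //.
rewrite (le_lt_trans (ler_wpM2l B0 (ltW Bm))) // mulrA ltr_pdivrMr; [nra | lra].
Unshelve. all: by end_near.
Qed.

End Converse.

Section ComplexContinuity.
Variables (R : realType) (X : topologicalType).
Implicit Types f g : X -> R[i].

(* [R[i]] carries no topology in the library: continuity of a complex-valued
   function is continuity of its real and imaginary parts. *)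
Definition ccontinuous f :=
  continuous (fun x => complex.Re (f x)) /\ continuous (fun x => complex.Im (f x)).

Lemma ccontinuous_cst (c : R[i]) : ccontinuous (fun=> c).
Proof. by split; exact: cst_continuous. Qed.

Lemma ccontinuousD f g : ccontinuous f -> ccontinuous g -> ccontinuous (f \+ g).
Proof.
move=> [fRe fIm] [gRe gIm]; split=> x /=.
- have -> : (fun x => complex.Re (f x + g x)) = (fun x => complex.Re (f x) + complex.Re (g x)).
    by apply: funext => y; case: (f y) (g y) => ? ? [].
  exact: (continuousD (fRe x) (gRe x)).
- have -> : (fun x => complex.Im (f x + g x)) = (fun x => complex.Im (f x) + complex.Im (g x)).
    by apply: funext => y; case: (f y) (g y) => ? ? [].
  exact: (continuousD (fIm x) (gIm x)).
Qed.

Lemma ccontinuousM f g : ccontinuous f -> ccontinuous g -> ccontinuous (f \* g).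
Proof.
move=> [fRe fIm] [gRe gIm]; split=> x /=.
- have -> : (fun x => complex.Re (f x * g x)) = (fun x =>
      complex.Re (f x) * complex.Re (g x) - complex.Im (f x) * complex.Im (g x)).
    by apply: funext => y; case: (f y) (g y) => ? ? [].
  exact: (continuousB (continuousM (fRe x) (gRe x)) (continuousM (fIm x) (gIm x))).
- have -> : (fun x => complex.Im (f x * g x)) = (fun x =>
      complex.Re (f x) * complex.Im (g x) + complex.Im (f x) * complex.Re (g x)).
    by apply: funext => y; case: (f y) (g y) => ? ? [] /= ? ?; rewrite addrC.
  exact: (continuousD (continuousM (fRe x) (gIm x)) (continuousM (fIm x) (gRe x))).
Qed.

Lemma ccontinuous_sum (J : Type) (r : seq J) (P : pred J) (F : J -> X -> R[i]) :
  (forall j, ccontinuous (F j)) -> ccontinuous (fun x => \sum_(j <- r | P j) F j x).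
Proof.
move=> Fc; elim: r => [|j r IHr].
  by under eq_fun do rewrite big_nil; exact: ccontinuous_cst.
under eq_fun do rewrite big_cons; case: (P j) => //.
exact: ccontinuousD.
Qed.

Lemma continuous_cabs f : ccontinuous f -> continuous (fun x => cabs (f x)).
Proof.
move=> [fRe fIm] x; apply: (@continuous_comp _ _ _
  (fun x => complex.Re (f x) ^+ 2 + complex.Im (f x) ^+ 2) (@Num.sqrt R)); last first.
  exact: sqrt_continuous.
exact: (continuousD (continuousM (fRe x) (fRe x)) (continuousM (fIm x) (fIm x))).
Qed.

End ComplexContinuity.

Lemma ccontinuous_comp (R : realType) (X Y : topologicalType) (h : X -> Y) (f : Y -> R[i]) :
  continuous h -> ccontinuous f -> ccontinuous (f \o h).
Proof.
move=> hc [fRe fIm]; split=> x.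
- exact: (continuous_comp (hc x) (fRe (h x))).
- exact: (continuous_comp (hc x) (fIm (h x))).
Qed.

Lemma compact_uniform_index (X : topologicalType) (K : set X) (P : nat -> X -> Prop) :
  compact K -> (forall x, K x -> exists n, \forall y \near x, P n y) ->
  exists M, forall x, K x -> exists2 n, (n <= M)%N & P n x.
Proof.
move=> /compact_near_coveringP Kc KP.
have /Kc [M _ MK] : forall x, K x -> \forall y \near x & M \near \oo, exists2 n, (n <= M)%N & P n y.
  move=> x /KP [n Pn]; exists ([set y | P n y], [set M | (n <= M)%N]).
    by split; [exact: Pn | exact: nbhs_infty_ge].
  by move=> [y M] [/= ? ?]; exists n.
by exists M => x; apply: (MK M (leqnn M)).
Qed.

Lemma compact_continuous_ub (R : realType) (X : topologicalType) (K : set X) (g : X -> R) :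
  compact K -> continuous g -> exists B, forall x, K x -> g x <= B.
Proof.
move=> Kc gc; have [|M gM] := @compact_uniform_index _ K (fun n x => g x < n%:R) Kc.
  move=> x _; exists (Num.truncn (g x)).+1.
  exact: (@cvgr_lt R X (nbhs x) _ g _ (gc x) _ (truncnS_gt (g x))).
exists M%:R => x /gM [n nM gn].
by rewrite (le_trans (ltW gn)) // ler_nat.
Qed.

Section Forward.
Variables (R : realType) (I : metricType R) (d : nat) (S : I -> 'M[R[i]]_d).
Variable Lam : set (nat -> I).
Local Notation X := {ptws nat -> I}.
Hypothesis S_cont : forall j k, ccontinuous (fun x : I => S x j k).
Hypothesis Lam_ne : Lam !=set0.
Hypothesis Lam_compact : @compact X Lam.
Hypothesis Lam_shift : forall i, Lam i -> Lam (theta_plus i).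
Hypothesis prodS_to0 : forall i, Lam i ->
  forall j k : 'I_d, (fun n => cabs (prodS S i n j k)) @ \oo --> (0 : R).

Lemma ccontinuous_prodS n a b : ccontinuous (fun x : X => prodS S x n a b).
Proof.
elim: n a b => [|n IHn] a b; first exact: ccontinuous_cst.
have -> : (fun x : X => prodS S x n.+1 a b) =
    (fun x => \sum_l S (x n) a l * prodS S x n l b) by apply: funext => x; rewrite /= mxE.
apply: ccontinuous_sum => l; apply: ccontinuousM (IHn l b).
apply: (@ccontinuous_comp _ _ _ (fun x : X => x n)) (S_cont a l).
exact: (@proj_continuous nat (fun=> I) n).
Qed.

Lemma continuous_mxnorm1_prodS n : continuous (fun x : X => mxnorm1 (prodS S x n)).
Proof.
apply: (continuous_big add_continuous) => a _.
apply: (continuous_big add_continuous) => b _.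
exact/continuous_cabs/ccontinuous_prodS.
Qed.

Lemma mxnorm1_prodS_cvg0 x : Lam x -> (fun n => mxnorm1 (prodS S x n)) @ \oo --> (0 : R).
Proof.
move=> Lx; have <- : \sum_(a < d) \sum_(b < d) (0 : R) = 0.
  by rewrite big1 // => a _; rewrite big1.
apply: (cvg_big add_continuous) => // a _.
by apply: (cvg_big add_continuous) => // b _; exact: prodS_to0.
Qed.

Lemma uniform_half_time :
  exists M, forall x, Lam x -> exists2 n, (0 < n <= M)%N & mxnorm1 (prodS S x n) < 2^-1.
Proof.
have half0 : (0 : R) < 2^-1 by rewrite invr_gt0.
have [x Lx|M hM] := @compact_uniform_index X Lam
    (fun n x => (0 < n)%N /\ mxnorm1 (prodS S x n) < 2^-1) Lam_compact.
  have [N _ hN] := cvgr_lt _ (mxnorm1_prodS_cvg0 Lx) _ half0.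
  exists N.+1; near=> y; split => //; near: y.
  exact: (cvgr_lt _ (@continuous_mxnorm1_prodS N.+1 x) _ (hN _ (leqnSn N))).
by exists M => x /hM [n nM [n0 half]]; exists n; rewrite ?n0.
Unshelve. all: by end_near.
Qed.

Lemma prodS_bounded_upto M :
  exists C0, forall x k, Lam x -> (k <= M)%N -> mxnorm1 (prodS S x k) <= C0.
Proof.
have [|C0 hC] := @compact_continuous_ub R X Lam
  (fun x => \sum_(k < M.+1) mxnorm1 (prodS S x k)) Lam_compact.
  by apply: (continuous_big add_continuous) => k _; exact: continuous_mxnorm1_prodS.
exists C0 => x k Lx kM; apply: le_trans (hC x Lx).
rewrite (bigD1 (Ordinal (kM : (k < M.+1)%N))) //= lerDl.
by apply: sumr_ge0 => *; exact: mxnorm1_ge0.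
Qed.

(* After [n] steps the product has passed through at least [n %/ M.+1]
   consecutive blocks of length at most [M], each halving its norm. *)
Lemma prodS_decay M C0 :
  (forall x, Lam x -> exists2 n, (0 < n <= M)%N & mxnorm1 (prodS S x n) < 2^-1) ->
  (forall x k, Lam x -> (k <= M)%N -> mxnorm1 (prodS S x k) <= C0) ->
  forall n x, Lam x -> mxnorm1 (prodS S x n) <= C0 * 2^-1 ^+ (n %/ M.+1).
Proof.
move=> half bounded n; elim/ltn_ind: n => n IHn x Lx.
have [nM|Mn] := leqP n M; first by rewrite divn_small ?ltnS // expr0 mulr1 bounded.
have [m /andP[m0 mM] xm] := half x Lx.
have mn : (m <= n)%N by rewrite (leq_trans mM) // ltnW.
have C0_ge0 : 0 <= C0 by apply: le_trans (bounded x 0%N Lx (leq0n M)); exact: mxnorm1_ge0.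
have Lxm : Lam (iter m theta_plus x) by exact: Lam_iter_theta_plus.
have nm_lt : (n - m < n)%N by rewrite ltn_subrL m0 (leq_trans m0 mn).
have blocks : (n %/ M.+1 <= ((n - m) %/ M.+1).+1)%N.
  have : (n <= (n - m) + 1 * M.+1)%N by rewrite mul1n -{1}(subnKC mn) addnC leq_add2l ltnW.
  by move/(leq_div2r M.+1); rewrite divnDMl // addn1.
rewrite -{1}(subnKC mn) prodS_add (le_trans (mxnorm1M _ _)) //.
apply: le_trans (ler_pM (mxnorm1_ge0 _) (mxnorm1_ge0 _) (IHn _ nm_lt _ Lxm) (ltW xm)) _.
rewrite -mulrA -exprSr ler_wpM2l //.
by apply: ler_wiXn2l blocks; rewrite ?invr_ge0 ?invf_le1 ?ler1n.
Qed.

Lemma Splus_bounded_contracting :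
  (exists beta : R, 0 < beta /\ forall A, Splus_all S Lam A -> opnorm2 A <= beta) /\
  (exists (gamma : R) (N : nat), 0 < gamma < 1 /\ (1 <= N)%N /\
     forall l, (N <= l)%N -> forall A, Splus S Lam l A -> specrad A <= gamma).
Proof.
have [M half] := uniform_half_time; have [C0 bounded] := prodS_bounded_upto M.
have decay := prodS_decay half bounded.
have [x0 Lx0] := Lam_ne.
have C0_ge0 : 0 <= C0 by apply: le_trans (bounded x0 0%N Lx0 (leq0n M)); exact: mxnorm1_ge0.
have half_le1 : (2^-1 : R) <= 1 by rewrite invf_le1 ?ler1n.
have prodS_le n x : Lam x -> mxnorm1 (prodS S x n) <= C0.
  move=> Lx; rewrite (le_trans (decay n x Lx)) // ler_piMr // exprn_ile1 // invr_ge0.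
split.
  exists (C0 + 1); split; first by rewrite ltr_wpDl.
  move=> A [l _ Al]; apply: le_trans (opnorm2_le_mxnorm1 _) _.
  apply: (@le_trans _ _ C0); last by rewrite lerDl.
  by case: l Al => [/= ->|l [x Lx <-]]; [exact: (prodS_le 0%N x0 Lx0) | exact: prodS_le].
set K := (Num.truncn (2 * C0)).+1.
have geom : C0 * 2^-1 ^+ K <= 2^-1.
  have : 2 * C0 <= 2 ^+ K.
    by rewrite (le_trans (ltW (truncnS_gt _))) // -natrX ler_nat ltnW // ltn_expl.
  by rewrite exprVn ler_pdivrMr ?exprn_gt0 //; lra.
exists 2^-1, (M.+1 * K)%N; split; first by apply/andP; split; lra.
split; first by rewrite muln_gt0.
move=> [|l] lN A; first by rewrite leqn0 muln_eq0 in lN.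
move=> [x Lx <-]; rewrite (le_trans (specrad_le_mxnorm1 _)) // (le_trans (decay _ _ Lx)) //.
rewrite (le_trans _ geom) // ler_wpM2l // ler_wiXn2l ?invr_ge0 //.
by rewrite -(mulKn K (ltn0Sn M)) leq_div2r.
Qed.

End Forward.

Unset Implicit Arguments.
Set Strict Implicit.

Theorem lemma3p1 (R : realType) (I : metricType R) (d : nat)
    (S : I -> 'M[R[i]]_d) (Lam : set (nat -> I)) :
  (1 <= d)%N ->
  (forall j k : 'I_d, continuous (fun x : I => complex.Re (S x j k)) /\
                      continuous (fun x : I => complex.Im (S x j k))) ->
  Lam !=set0 ->
  @compact {ptws nat -> I} Lam ->
  (forall i, Lam i -> Lam (theta_plus i)) ->
  (forall i, Lam i ->
     forall j k : 'I_d, (fun n => cabs (prodS S i n j k)) @ \oo --> (0 : R))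
  <->
  ((exists beta : R, 0 < beta /\
      forall A, Splus_all S Lam A -> opnorm2 A <= beta) /\
   (exists (gamma : R) (N : nat), 0 < gamma < 1 /\ (1 <= N)%N /\
      forall l, (N <= l)%N -> forall A, Splus S Lam l A -> specrad A <= gamma)).
Proof.
move=> _ S_cont Lam_ne Lam_compact Lam_shift; split.
  exact: Splus_bounded_contracting.
move=> [[beta [_ bounded]] [gamma [N [/andP[_ gamma_lt1] [N_gt0 contracting]]]]] i Li.
exact: (prodS_cvg0 Lam_shift bounded gamma_lt1 N_gt0 contracting Li).
Qed.
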